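(* Let $S$ be a linear relation in $\mathfrak H$ with numerical range $\mathcal W(S)=\{0\}$ (equivalently, $(\varphi',\varphi)=0$ for all $\{\varphi,\varphi'\}\in S$, i.e. $\mathrm{dom}\,S\perp\mathrm{ran}\,S$). Then $S$ is nonnegative, its Friedrichs extension is $S_{\rm F}=\overline{\mathrm{dom}}\,S\times\mathrm{mul}\,S^*$, and its Kreĭn type extension at $0$ is $S_{{\rm K},0}=\ker S^*\times\overline{\mathrm{ran}}\,S$.
   Context: Linear relations in $\mathfrak H$ are linear subspaces of $\mathfrak H\times\mathfrak H$; $\mathrm{dom},\mathrm{ran},\ker T=\{f:\{f,0\}\in T\},\mathrm{mul}\,T=\{g:\{0,g\}\in T\}$; $T^*$ adjoint, $T^{**}$ closure, products $RT=\{\{f,h\}:\exists g,\{f,g\}\in T,\{g,h\}\in R\}$. Numerical range $\mathcal W(S)=\{(\varphi',\varphi):\{\varphi,\varphi'\}\in S,\|\varphi\|=1\}$ (and $\{0\}$ if $\mathrm{dom}\,S=\{0\}$). For a nonnegative relation $S$, $\mathfrak t(S)[\varphi,\psi]=(\varphi',\psi)$ on $\mathrm{dom}\,S$; a representing map for $\mathfrak t(S)$ (with $c=0$) is a linear operator $Q$ into a Hilbert space with $\mathrm{dom}\,Q=\mathrm{dom}\,S$ and $\mathfrak t(S)[\varphi,\psi]=(Q\varphi,Q\psi)$; companion relation $J=\{\{Q\varphi,\varphi'\}:\{\varphi,\varphi'\}\in S\}$. Friedrichs extension $S_{\rm F}=Q^*Q^{**}$ and Kreĭn type extension $S_{{\rm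 K},0}=J^{**}J^*$ (both independent of the choice of $Q$). *)

From HB Require Import structures.
From mathcomp Require Import all_boot all_order all_algebra.
From mathcomp Require Import complex.
From mathcomp Require Import reals.
Set Implicit Arguments. Unset Strict Implicit. Unset Printing Implicit Defensive.
Import Order.TTheory GRing.Theory Num.Theory.
Local Open Scope ring_scope.

Notation cplx R := (complex.complex (reals.Real.sort R)).

Section HilbertDefs.
Variable R : realType.
Local Notation C := (cplx R).

Definition is_inner (H : lmodType C) (dot : H -> H -> C) : Prop :=
  [/\ (forall a x y z, dot (a *: x + y) z = a * dot x z + dot y z),
      (forall x y, dot y x = (dot x y)^*),
      (forall x, 0 <= dot x x) &
      (forall x, dot x x = 0 -> x = 0)].

Definition inorm (H : lmodType C) (dot : H -> H -> C) (x : H) : C :=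
  sqrtC (dot x x).

Definition complete_inner (H : lmodType C) (dot : H -> H -> C) : Prop :=
  forall u : nat -> H,
    (forall eps : C, 0 < eps -> exists N, forall m n, (N <= m)%N -> (N <= n)%N ->
        inorm dot (u m - u n) < eps) ->
    exists x, forall eps : C, 0 < eps -> exists N, forall n, (N <= n)%N ->
        inorm dot (u n - x) < eps.

Definition hilbert (H : lmodType C) (dot : H -> H -> C) : Prop :=
  is_inner dot /\ complete_inner dot.

Definition nclosure (H : lmodType C) (dot : H -> H -> C) (M : H -> Prop) : H -> Prop :=
  fun x => forall eps : C, 0 < eps -> exists y, M y /\ inorm dot (x - y) < eps.

(* Linear relations from H to K: linear subspaces of H x K, given as predicates. *)
Definition linrel (H K : lmodType C) (T : H -> K -> Prop) : Prop :=
  [/\ T 0 0,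
      (forall f g f' g', T f g -> T f' g' -> T (f + f') (g + g')) &
      (forall (a : C) f g, T f g -> T (a *: f) (a *: g))].

Definition rdom (H K : lmodType C) (T : H -> K -> Prop) : H -> Prop :=
  fun f => exists g, T f g.
Definition rran (H K : lmodType C) (T : H -> K -> Prop) : K -> Prop :=
  fun g => exists f, T f g.
Definition rker (H K : lmodType C) (T : H -> K -> Prop) : H -> Prop :=
  fun f => T f 0.
Definition rmul (H K : lmodType C) (T : H -> K -> Prop) : K -> Prop :=
  fun g => T 0 g.

Definition radj (H K : lmodType C) (dotH : H -> H -> C) (dotK : K -> K -> C)
  (T : H -> K -> Prop) : K -> H -> Prop :=
  fun h k => forall f g, T f g -> dotH k f = dotK h g.

Definition rprod (H K L : lmodType C) (Rr : K -> L -> Prop) (T : H -> K -> Prop)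
  : H -> L -> Prop :=
  fun f h => exists g, T f g /\ Rr g h.

Definition numrange (H : lmodType C) (dot : H -> H -> C) (S : H -> H -> Prop)
  : C -> Prop :=
  fun z => (exists phi phi', S phi phi' /\ inorm dot phi = 1 /\ z = dot phi' phi)
        \/ ((forall phi, rdom S phi -> phi = 0) /\ z = 0).

Definition nonneg_rel (H : lmodType C) (dot : H -> H -> C) (S : H -> H -> Prop) : Prop :=
  forall phi phi', S phi phi' -> 0 <= dot phi' phi.

(* Q : H -> K is a representing map (with c = 0) for the form t(S):
   a linear operator with dom Q = dom S and t(S)[phi,psi] = (Q phi, Q psi). *)
Definition representing_map (H K : lmodType C) (dotH : H -> H -> C)
  (dotK : K -> K -> C) (S : H -> H -> Prop) (Q : H -> K -> Prop) : Prop :=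
  [/\ linrel Q,
      (forall f g1 g2, Q f g1 -> Q f g2 -> g1 = g2),
      (forall f, rdom Q f <-> rdom S f) &
      (forall phi phi' psi y z, S phi phi' ->
          Q phi y -> Q psi z -> dotH phi' psi = dotK y z)].

Definition companion (H K : lmodType C) (S : H -> H -> Prop) (Q : H -> K -> Prop)
  : K -> H -> Prop :=
  fun y g => exists phi, S phi g /\ Q phi y.

(* Friedrichs extension S_F = Q^* Q^** . *)
Definition friedrichs (H K : lmodType C) (dotH : H -> H -> C) (dotK : K -> K -> C)
  (Q : H -> K -> Prop) : H -> H -> Prop :=
  rprod (radj dotH dotK Q) (radj dotK dotH (radj dotH dotK Q)).

(* Krein type extension S_{K,0} = J^** J^* . *)
Definition krein0 (H K : lmodType C) (dotH : H -> H -> C) (dotK : K -> K -> C)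
  (S : H -> H -> Prop) (Q : H -> K -> Prop) : H -> H -> Prop :=
  let J := companion S Q in
  rprod (radj dotH dotK (radj dotK dotH J)) (radj dotK dotH J).

End HilbertDefs.

From mathcomp Require Import all_boot all_order all_algebra.
From mathcomp Require Import complex reals classical_sets boolp.
From mathcomp Require Import ring lra.
Import Order.TTheory GRing.Theory Num.Theory.
Local Open Scope ring_scope.
Local Open Scope classical_set_scope.

(* Since (phi', phi) = 0 on S, the form t(S) vanishes, so every representing
   map Q is zero: Q = dom S x {0}, and the companion relation is
   J = {0} x ran S.  Every relation occurring in S_F and S_{K,0} is then a
   product A x B of subspaces; the adjoint of A x B is B^perp x A^perp, and a
   product of two such relations is again one.  The only analytic input is
   that A^perp^perp is the closure of a subspace A of a Hilbert space, proved
   with a minimizing sequence for the distance from a point to A. *)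

Section InnerProduct.
Context {R : realType} {H : lmodType (cplx R)} {dot : H -> H -> cplx R}.
Hypothesis hd : is_inner dot.
Local Notation C := (cplx R).

Lemma dotDZl a x y z : dot (a *: x + y) z = a * dot x z + dot y z.
Proof. by case: hd => h _ _ _; apply: h. Qed.
Lemma dotC x y : dot y x = (dot x y)^*.
Proof. by case: hd => _ h _ _; apply: h. Qed.
Lemma dot_ge0 x : 0 <= dot x x.
Proof. by case: hd => _ _ h _; apply: h. Qed.
Lemma dot_eq0 x : dot x x = 0 -> x = 0.
Proof. by case: hd => _ _ _ h; apply: h. Qed.

Lemma dot0l z : dot 0 z = 0.
Proof.
have := dotDZl 1 0 0 z; rewrite scaler0 addr0 mul1r => h.
by apply: (addrI (dot 0 z)); rewrite addr0 -h.
Qed.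
Lemma dotZl a x z : dot (a *: x) z = a * dot x z.
Proof. by have := dotDZl a x 0 z; rewrite addr0 dot0l addr0. Qed.
Lemma dotDl x y z : dot (x + y) z = dot x z + dot y z.
Proof. by have := dotDZl 1 x y z; rewrite scale1r mul1r. Qed.
Lemma dotNl x z : dot (- x) z = - dot x z.
Proof. by rewrite -scaleN1r dotZl mulN1r. Qed.
Lemma dotBl x y z : dot (x - y) z = dot x z - dot y z.
Proof. by rewrite dotDl dotNl. Qed.
Lemma dot0r z : dot z 0 = 0.
Proof. by rewrite dotC dot0l conjC0. Qed.
Lemma dotZr a x y : dot x (a *: y) = a^* * dot x y.
Proof. by rewrite dotC dotZl rmorphM /= -dotC. Qed.
Lemma dotDr x y z : dot x (y + z) = dot x y + dot x z.
Proof. by rewrite dotC dotDl rmorphD /= -!dotC. Qed.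
Lemma dotNr x z : dot x (- z) = - dot x z.
Proof. by rewrite dotC dotNl rmorphN /= -dotC. Qed.
Lemma dotBr x y z : dot x (y - z) = dot x y - dot x z.
Proof. by rewrite dotDr dotNr. Qed.

Definition sqnorm x : R := complex.Re (dot x x).
Definition abs2 (c : C) : R := complex.Re c ^+ 2 + complex.Im c ^+ 2.

Lemma dotxx x : dot x x = (sqnorm x)%:C%C.
Proof.
rewrite /sqnorm; have := dot_ge0 x; case: (dot x x) => a b.
by rewrite lecE /= => /andP[/eqP -> _].
Qed.
Lemma sqnorm_ge0 x : 0 <= sqnorm x.
Proof. by have := dot_ge0 x; rewrite dotxx ler0c. Qed.
Lemma sqnorm_eq0 x : sqnorm x = 0 -> x = 0.
Proof. by move=> h; apply: dot_eq0; rewrite dotxx h. Qed.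
Lemma sqnormB x y : sqnorm (x - y) = sqnorm (y - x).
Proof. by rewrite -opprB /sqnorm dotNl dotNr opprK. Qed.
Lemma mulcJ (c : C) : c * c^* = (abs2 c)%:C%C.
Proof. by rewrite -normCK -add_Re2_Im2. Qed.

Lemma sqnormZR r y : sqnorm (r%:C%C *: y) = r ^+ 2 * sqnorm y.
Proof.
rewrite /sqnorm dotZl dotZr mulrA mulcJ dotxx -rmorphM.
by rewrite /abs2 /= expr0n /= addr0.
Qed.

Lemma abs2_ge0 c : 0 <= abs2 c.
Proof. by rewrite /abs2 addr_ge0 ?sqr_ge0. Qed.
Lemma abs2_eq0 c : abs2 c = 0 -> c = 0.
Proof.
case: c => a b; rewrite /abs2 /= => /eqP; rewrite paddr_eq0 ?sqr_ge0 //.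
by rewrite !sqrf_eq0 => /andP[/eqP -> /eqP ->].
Qed.
Lemma abs2D c e : abs2 (c + e) <= 2 * abs2 c + 2 * abs2 e.
Proof.
case: c e => a b [a' b']; rewrite /abs2 /= -subr_ge0.
have -> : 2 * (a ^+ 2 + b ^+ 2) + 2 * (a' ^+ 2 + b' ^+ 2)
          - ((a + a') ^+ 2 + (b + b') ^+ 2) = (a - a') ^+ 2 + (b - b') ^+ 2.
  by ring.
by rewrite addr_ge0 ?sqr_ge0.
Qed.

Lemma sqnorm_parallelogram a b :
  sqnorm (a - b) + sqnorm (a + b) = 2 * sqnorm a + 2 * sqnorm b.
Proof.
apply: (@complexI R); rewrite !rmorphD !rmorphM rmorph_nat /= -!dotxx.
by rewrite !dotBl !dotDl !dotBr !dotDr; ring.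
Qed.

Lemma sqnorm_sub_proj v a s :
  sqnorm (v - (s%:C%C * dot v a) *: a) =
  sqnorm v - 2 * s * abs2 (dot v a) + s ^+ 2 * abs2 (dot v a) * sqnorm a.
Proof.
have conjR r : (r%:C%C)^* = r%:C%C :> C by apply/conj_Creal; rewrite complex_real.
apply: (@complexI R); rewrite -dotxx dotBl !dotBr !dotZl !dotZr (dotC v a).
rewrite !dotxx rmorphM /= conjR !rmorphD !rmorphN !rmorphM rmorph_nat /=.
by rewrite -mulcJ; ring.
Qed.

(* The usual choice s = 1 / |a|^2 breaks down for a = 0; s = 1 / (|a|^2 + 1)
   always works, at the price of |a|^2 + 1 in Cauchy-Schwarz below. *)
Lemma sqnorm_sub_proj_le v a :
  (sqnorm a + 1)^-1 * abs2 (dot v a) <=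
  sqnorm v - sqnorm (v - ((sqnorm a + 1)^-1%:C%C * dot v a) *: a).
Proof.
rewrite sqnorm_sub_proj; set s := _^-1; set q := abs2 _; set k := sqnorm a.
have k0 : 0 <= k := sqnorm_ge0 a; have q0 : 0 <= q := abs2_ge0 _.
have sk : s * (k + 1) = 1 by rewrite mulVf // gt_eqF //; lra.
have -> : s ^+ 2 * q * k = s * q * (s * (k + 1)) - s ^+ 2 * q by ring.
have : 0 <= s ^+ 2 * q by rewrite mulr_ge0 // exprn_ge0 // invr_ge0; lra.
by rewrite sk mulr1; lra.
Qed.

Lemma cauchy_schwarz v a : abs2 (dot v a) <= sqnorm v * (sqnorm a + 1).
Proof.
have k0 : 0 < sqnorm a + 1 by have := sqnorm_ge0 a; lra.
rewrite -ler_pdivrMr // mulrC; apply: le_trans (sqnorm_sub_proj_le v a) _.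
by rewrite lerBlDr lerDl sqnorm_ge0.
Qed.

Lemma inorm_lt v r : 0 < r -> (inorm dot v < r%:C%C) = (sqnorm v < r ^+ 2).
Proof.
move=> r0; rewrite /inorm dotxx -(sqrCK (x:=r%:C%C)) ?ler0c ?ltW //.
rewrite ltr_sqrtC ?nnegrE -?rmorphXn ?ltcR ?ler0c ?sqnorm_ge0 //.
by rewrite exprn_ge0 // ltW.
Qed.

Lemma gt0_complex_real (eps : C) :
  0 < eps -> eps = (complex.Re eps)%:C%C /\ 0 < complex.Re eps.
Proof. by case: eps => a b; rewrite ltcE /= => /andP[/eqP -> h]. Qed.

Lemma nclosure_sqnormP M x : nclosure dot M x <->
  forall e, 0 < e -> exists m, M m /\ sqnorm (x - m) < e.
Proof.
split=> [h e e0|h eps /gt0_complex_real[-> e0]].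
  have e1 : 0 < (Num.sqrt e)%:C%C :> C by rewrite ltcR sqrtr_gt0.
  have [m [Mm hm]] := h _ e1; exists m; split => //.
  by move: hm; rewrite inorm_lt ?sqrtr_gt0 // sqr_sqrtr // ltW.
have [m [Mm hm]] := h _ (exprn_gt0 2 e0).
by exists m; split => //; rewrite inorm_lt.
Qed.

Definition cauchy_sqnorm (u : nat -> H) := forall e, 0 < e ->
  exists N, forall m n, (N <= m)%N -> (N <= n)%N -> sqnorm (u m - u n) < e.
Definition converges_to (u : nat -> H) p := forall e, 0 < e ->
  exists N, forall n, (N <= n)%N -> sqnorm (u n - p) < e.

Lemma complete_sqnorm (hc : complete_inner dot) {u} :
  cauchy_sqnorm u -> exists p, converges_to u p.
Proof.
move=> h; have [p hp] : exists p, forall eps : C, 0 < eps ->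
    exists N, forall n, (N <= n)%N -> inorm dot (u n - p) < eps.
  apply: hc => eps /gt0_complex_real[-> e0]; have [N hN] := h _ (exprn_gt0 2 e0).
  by exists N => m n hm hn; rewrite inorm_lt // hN.
exists p => e e0; have e1 : 0 < (Num.sqrt e)%:C%C :> C by rewrite ltcR sqrtr_gt0.
have [N hN] := hp _ e1; exists N => n hn.
by have := hN n hn; rewrite inorm_lt ?sqrtr_gt0 // sqr_sqrtr // ltW.
Qed.

Definition orth (M : set H) : set H := fun k => forall a, M a -> dot k a = 0.

Lemma orth0 M : orth M 0.
Proof. by move=> a _; rewrite dot0l. Qed.

Lemma orth_set1 : orth [set 0] = setT.
Proof. by apply/funext => k; apply/propext; split=> // _ a ->; rewrite dot0r. Qed.

Lemma orth_setT : orth setT = [set 0].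
Proof.
apply/funext => k; apply/propext; split=> [hk|-> a _]; last by rewrite dot0l.
exact/dot_eq0/hk.
Qed.

Lemma nclosure_orth {M x k} : nclosure dot M x -> orth M k -> dot x k = 0.
Proof.
move=> /nclosure_sqnormP hx hk; apply: abs2_eq0; apply/eqP.
rewrite eq_le abs2_ge0 andbT; apply/ler_addgt0Pr => e e0; rewrite add0r.
have k0 : 0 < sqnorm k + 1 by have := sqnorm_ge0 k; lra.
have [m [Mm hm]] := hx (e / (sqnorm k + 1)) (divr_gt0 e0 k0).
have <- : dot (x - m) k = dot x k by rewrite dotBl (dotC k m) hk // conjC0 subr0.
by apply: le_trans (cauchy_schwarz _ _) _; rewrite -ler_pdivlMr // ltW.
Qed.

End InnerProduct.

Arguments sqnorm {R H} dot x.
Arguments orth {R H} dot M k.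
Arguments cauchy_sqnorm {R H} dot u.
Arguments converges_to {R H} dot u p.

Definition subspace {R : realType} {H : lmodType (cplx R)} (M : set H) :=
  [/\ M 0, (forall x y, M x -> M y -> M (x + y)) &
      (forall (a : cplx R) x, M x -> M (a *: x))].

Lemma archi_inv_lt {R : realType} {e : R} :
  0 < e -> exists N, forall n, (N <= n)%N -> n.+1%:R^-1 < e.
Proof.
move=> e0; have ei : 0 <= e^-1 by rewrite invr_ge0 ltW.
exists (Num.Def.archi_bound e^-1) => n hn.
rewrite -(invrK e) ltf_pV2 ?posrE ?invr_gt0 //.
apply: lt_le_trans (archi_boundP ei) _.
by rewrite ler_nat; apply: leq_trans hn _.
Qed.

Section Projection.
Context {R : realType} {H : lmodType (cplx R)} {dot : H -> H -> cplx R}.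
Hypotheses (hd : is_inner dot) (hc : complete_inner dot).
Variable M : set H.
Hypothesis hM : subspace M.
Variable x : H.

Definition dist2 := inf [set sqnorm dot (x - m) | m in M].

Lemma has_inf_dist2 : has_inf [set sqnorm dot (x - m) | m in M].
Proof.
case: hM => M0 _ _; split; first by exists (sqnorm dot (x - 0)), 0.
by exists 0 => _ [m _ <-]; apply: sqnorm_ge0.
Qed.

Lemma dist2_le {m} : M m -> dist2 <= sqnorm dot (x - m).
Proof. by move=> Mm; apply: (ge_inf has_inf_dist2.2); exists m. Qed.

Definition minimizing (u : nat -> H) :=
  forall n, M (u n) /\ sqnorm dot (x - u n) < dist2 + n.+1%:R^-1.

Lemma exists_minimizing : exists u, minimizing u.
Proof.
suff /choice[u hu] : forall n, exists m, M m /\ sqnorm dot (x - m) < dist2 + n.+1%:R^-1.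
  by exists u.
move=> n; have n0 : 0 < (n.+1%:R : R)^-1 by rewrite invr_gt0 ltr0Sn.
by have [_ [m Mm <-] hr] := inf_adherent n0 has_inf_dist2; exists m.
Qed.

(* The midpoint of u m and u n lies in M, so by the parallelogram law
   |u m - u n|^2 <= 2 (|x - u m|^2 + |x - u n|^2) - 4 dist2. *)
Lemma minimizing_cauchy {u} : minimizing u -> cauchy_sqnorm dot u.
Proof.
case: hM => _ MD MZ hu e e0.
have [N hN] := archi_inv_lt (divr_gt0 e0 (ltr0n R 4)).
exists N => m n hm hn; have := sqnorm_parallelogram hd (x - u n) (x - u m).
have -> : x - u n - (x - u m) = u m - u n by rewrite opprB addrC addrA subrK.
have -> : x - u n + (x - u m) =
          (2 : R)%:C%C *: (x - (2^-1 : R)%:C%C *: (u n + u m)).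
  rewrite scalerBr scalerA -rmorphM mulfV ?pnatr_eq0 // rmorph1 scale1r.
  by rewrite rmorph_nat scaler_nat mulr2n opprD addrACA.
rewrite sqnormZR //.
have := dist2_le (MZ (2^-1 : R)%:C%C _ (MD _ _ (hu n).1 (hu m).1)).
have := (hu m).2; have := (hu n).2; have := hN m hm; have := hN n hn.
move: (m.+1%:R^-1) (n.+1%:R^-1) => a b; lra.
Qed.

(* Variational argument: moving u n in the direction of a in M cannot push
   the distance below dist2, which bounds (x - u n, a); letting n grow
   gives (x - p, a) = 0. *)
Lemma minimizing_limit_orth {u p} :
  minimizing u -> converges_to dot u p -> orth dot M (x - p).
Proof.
case: hM => _ MD MZ hu hp a Ma; apply: abs2_eq0; apply/eqP.
rewrite eq_le abs2_ge0 andbT; apply/ler_addgt0Pr => e e0; rewrite add0r.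
set K := sqnorm dot a + 1.
have K0 : 0 < K by have := sqnorm_ge0 hd a; rewrite /K; lra.
have e4 : 0 < e / (4 * K) by rewrite divr_gt0 // mulr_gt0.
have [N1 hN1] := hp _ e4; have [N2 hN2] := archi_inv_lt e4.
have hn1 := hN1 (maxn N1 N2) (leq_maxl _ _).
have hn2 := hN2 (maxn N1 N2) (leq_maxr _ _).
move: (maxn N1 N2) hn1 hn2 => n hn1 hn2.
have -> : x - p = (x - u n) + (u n - p) by rewrite addrA subrK.
rewrite dotDl //.
set c := dot _ a; set f := dot _ a.
have hf : abs2 f <= sqnorm dot (u n - p) * K := cauchy_schwarz hd _ _.
have hc1 : K^-1 * abs2 c <= sqnorm dot (x - u n) - dist2.
  have := sqnorm_sub_proj_le hd (x - u n) a; rewrite -/K -/c.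
  set t := (K^-1)%:C%C * c.
  have := dist2_le (MD _ _ (hu n).1 (MZ t _ Ma)).
  rewrite opprD addrA; lra.
have hc2 : abs2 c <= (sqnorm dot (x - u n) - dist2) * K.
  by rewrite -ler_pdivrMr // mulrC.
have eK : e / (4 * K) * K = e / 4 by field; rewrite gt_eqF.
have hK1 : (sqnorm dot (x - u n) - dist2) * K < e / 4.
  rewrite -eK ltr_pM2r //; have := (hu n).2; move: hn2.
  move: (n.+1%:R^-1) => b; lra.
have hK2 : sqnorm dot (u n - p) * K < e / 4 by rewrite -eK ltr_pM2r.
have := abs2D c f; lra.
Qed.

Lemma orth_orth_nclosure : orth dot (orth dot M) x -> nclosure dot M x.
Proof.
move=> hx; have [u hu] := exists_minimizing.
have [p hp] := complete_sqnorm hd hc (minimizing_cauchy hu).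
have pM : nclosure dot M p.
  apply/(nclosure_sqnormP hd) => e /hp[N hN]; exists (u N); split.
    exact: (hu N).1.
  by rewrite sqnormB //; apply: hN.
have xp := minimizing_limit_orth hu hp.
have w0 : x - p = 0.
  by apply: (dot_eq0 hd); rewrite dotBl // hx // (nclosure_orth hd pM xp) subrr.
by rewrite -(subrK p x) w0 add0r.
Qed.

End Projection.

Lemma orth_orthE {R : realType} {H : lmodType (cplx R)} {dot : H -> H -> cplx R}
  {M : set H} : hilbert dot -> subspace M -> orth dot (orth dot M) = nclosure dot M.
Proof.
move=> [hd hc] hM; apply/funext => x; apply/propext; split.
  exact: orth_orth_nclosure.
by move=> hx k hk; apply: nclosure_orth hx hk.
Qed.

Definition prel {T U : Type} (A : set T) (B : set U) : T -> U -> Prop :=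
  fun f g => A f /\ B g.

Section ProductRelations.
Context {R : realType} {H K : lmodType (cplx R)}.
Variables (dotH : H -> H -> cplx R) (dotK : K -> K -> cplx R).

Lemma radj_prel A B : is_inner dotH -> is_inner dotK -> A 0 -> B 0 ->
  radj dotH dotK (prel A B) = prel (orth dotK B) (orth dotH A).
Proof.
move=> hdH hdK A0 B0; apply/funext => h; apply/funext => k; apply/propext.
split=> [hk|[hB hA] f g [Af Bg]]; last by rewrite hA // hB.
split=> [g Bg|f Af].
  by have := hk 0 g (conj A0 Bg); rewrite dot0r // => <-.
by have := hk f 0 (conj Af B0); rewrite dot0r.
Qed.

Lemma rmul_radj (T : H -> K -> Prop) :
  is_inner dotK -> rmul (radj dotH dotK T) = orth dotH (rdom T).
Proof.
move=> hdK; apply/funext => h; apply/propext.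
split=> [hh f [g Tfg]|hh f g Tfg]; first by rewrite (hh f g Tfg) dot0l.
by rewrite hh ?dot0l //; exists g.
Qed.

Lemma rker_radj (T : H -> K -> Prop) :
  is_inner dotH -> rker (radj dotH dotK T) = orth dotK (rran T).
Proof.
move=> hdH; apply/funext => h; apply/propext.
split=> [hh g [f Tfg]|hh f g Tfg]; first by rewrite -(hh f g Tfg) dot0l.
by rewrite hh ?dot0l //; exists f.
Qed.

Lemma subspace_rdom {T : H -> K -> Prop} : linrel T -> subspace (rdom T).
Proof.
case=> T00 TD TZ; split; first by exists 0.
  by move=> x y [gx Tx] [gy Ty]; exists (gx + gy); apply: TD.
by move=> a x [g Tx]; exists (a *: g); apply: TZ.
Qed.

Lemma subspace_rran {T : H -> K -> Prop} : linrel T -> subspace (rran T).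
Proof.
case=> T00 TD TZ; split; first by exists 0.
  by move=> x y [fx Tx] [fy Ty]; exists (fx + fy); apply: TD.
by move=> a x [f Tx]; exists (a *: f); apply: TZ.
Qed.

End ProductRelations.

Lemma rprod_prel {R : realType} {H K L : lmodType (cplx R)}
  (A : set K) (B : set L) (C' : set H) (D : set K) :
  A 0 -> D 0 -> rprod (prel A B) (prel C' D) = prel C' B.
Proof.
move=> A0 D0; apply/funext => f; apply/funext => h; apply/propext.
by split=> [[g [[Cf _] [_ Bh]]]|[Cf Bh]]; last exists 0.
Qed.

Lemma companion_prel {R : realType} {H K : lmodType (cplx R)} (S : H -> H -> Prop) :
  companion S (prel (rdom S) [set 0 : K]) = prel [set 0] (rran S).
Proof.
apply/funext => y; apply/funext => g; apply/propext.
split=> [[phi [Sg [_ ->]]]|[-> [phi Sg]]]; first by split=> //; exists phi.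
by exists phi; split=> //; split=> //; exists g.
Qed.

Lemma numrange0_orth {R : realType} {H : lmodType (cplx R)} {dot : H -> H -> cplx R}
  {S : H -> H -> Prop} : is_inner dot -> linrel S ->
  (forall z, numrange dot S z <-> z = 0) ->
  forall phi phi', S phi phi' -> dot phi' phi = 0.
Proof.
move=> hd [_ _ SZ] hW phi phi' Sp.
have [->|phi0] := eqVneq phi 0; first by rewrite dot0r.
have np : 0 < sqnorm dot phi.
  by rewrite lt_def sqnorm_ge0 // andbT; apply: contra_neq phi0; apply: sqnorm_eq0.
set a : cplx R := (Num.sqrt (sqnorm dot phi))^-1%:C%C.
have ha : a * a^* * (sqnorm dot phi)%:C%C = 1.
  rewrite -normCK -add_Re2_Im2 /= expr0n /= addr0 exprVn sqr_sqrtr ?ltW //.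
  by rewrite -!rmorphM mulVf ?gt_eqF.
have /hW : numrange dot S (dot (a *: phi') (a *: phi)).
  left; exists (a *: phi), (a *: phi'); split; first exact: SZ.
  by split=> //; rewrite /inorm dotZl // dotZr // mulrA dotxx // ha sqrtC1.
rewrite dotZl // dotZr // mulrA => /eqP; rewrite mulf_eq0 => /orP[|/eqP//].
by move=> /eqP h; move: ha; rewrite h mul0r => /esym/eqP; rewrite oner_eq0.
Qed.

Lemma representing_map_orth {R : realType} {H K : lmodType (cplx R)}
  {dot : H -> H -> cplx R} {dotK : K -> K -> cplx R} {S : H -> H -> Prop}
  {Q : H -> K -> Prop} : is_inner dotK -> representing_map dot dotK S Q ->
  (forall phi phi', S phi phi' -> dot phi' phi = 0) ->
  Q = prel (rdom S) [set 0].
Proof.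
move=> hdK [_ _ hQdom hQS] hS.
have Q0 f y : Q f y -> y = 0.
  move=> Qfy; have [phi' Sf] : rdom S f by apply/hQdom; exists y.
  by apply: (dot_eq0 hdK); rewrite -(hQS _ _ _ _ _ Sf Qfy Qfy) hS.
apply/funext => f; apply/funext => y; apply/propext; split=> [Qfy|[Sf ->]].
  by split; [apply/hQdom; exists y | exact: Q0 Qfy].
by have [y' Qfy'] := proj2 (hQdom f) Sf; rewrite -(Q0 _ _ Qfy').
Qed.

Theorem lemma8p2 (R : realType) (H : lmodType (cplx R))
  (dot : H -> H -> cplx R) (hH : hilbert dot)
  (S : H -> H -> Prop) (hS : linrel S)
  (hW : forall z, numrange dot S z <-> z = 0) :
  nonneg_rel dot S /\
  (forall (K : lmodType (cplx R)) (dotK : K -> K -> cplx R) (Q : H -> K -> Prop),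
     hilbert dotK -> representing_map dot dotK S Q ->
     (forall f h, friedrichs dot dotK Q f h <->
        nclosure dot (rdom S) f /\ rmul (radj dot dot S) h) /\
     (forall f h, krein0 dot dotK S Q f h <->
        rker (radj dot dot S) f /\ nclosure dot (rran S) h)).
Proof.
have hd := hH.1; have hSo := numrange0_orth hd hS hW.
split=> [phi phi' /hSo ->//|K dotK Q [hdK _] hQ].
have [dom0 ran0] : rdom S 0 /\ rran S 0 by split; exists 0; case: hS.
rewrite /friedrichs /krein0 /= (representing_map_orth hdK hQ hSo) companion_prel.
have orthS0 M : orth dot M 0 := orth0 hd M.
have [domS ranS] := (subspace_rdom hS, subspace_rran hS).
rewrite !radj_prel ?orth_set1 ?orth_setT // !orth_orthE //.
by rewrite rprod_prel // rprod_prel // rmul_radj // rker_radj.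
Qed.
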